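(* For $j\in\omega$ let $X_j=\{v_{j,s}: s\in 2^j\}$ (distinct new points indexed by binary strings of length $j$, the sets $X_j$ pairwise disjoint), and for $n\in\omega$ let $H_n$ be the tournament with domain $\bigcup_{j<n}X_j$ (so $|H_n|=2^n-1$) with orientation: for $j>i$, $v_{j,s}\to v_{i,t}$ iff $s(i)=1$ (and otherwise $v_{i,t}\to v_{j,s}$); within a level, $v_{j,s}\to v_{j,t}$ iff $s<_{\mathrm{lex}}t$. Then for every $n\ge1$, $\mathsf{rk}(H_n)=n$.
   Context: A tournament is a structure $(T,\to)$ such that for any two distinct $u,v$ exactly one of $u\to v$, $v\to u$ holds. Let $\mathcal F$ be the class of finite tournaments. Substructures are induced sub-tournaments and $\mathsf{age}(X)$ is the set of finite sub-tournaments of $X$. For $A\le B$, $B$ is a prime extension of $A$ if $|B\setminus A|=1$; a realization of $B$ in $X$ (where $A\le X$) is $C\le X$ with $A\le C$ and an isomorphism $B\to C$ fixing $A$ pointwise. For $F\in\mathsf{age}(X)$ define by recursion: $\mathsf{rk}_X(F)\ge0$ always; $\mathsf{rk}_X(F)\ge\alpha+1$ iff every prime extension $B\in\mathcal F$ of $F$ has a realization $C$ in $X$ with $\mathsf{rk}_X(C)\ge\alpha$; for limit $\alpha$, $\mathsf{rk}_X(F)\ge\alpha$ iff $\mathsf{rk}_X(F)\ge\beta$ for all $\beta<\alpha$. $\mathsf{rk}_X(F)=\sup\{\alpha:\mathsf{rk}_X(F)\ge\alpha\}$ (or $\infty$), and $\mathsf{rk}(X)=\mathsf{rk}_X(\emptyset)$.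 $<_{\mathrm{lex}}$ is the lexicographic order on binary strings of equal length. *)

From mathcomp Require Import all_boot.
Set Implicit Arguments. Unset Strict Implicit. Unset Printing Implicit Defensive.

Definition is_tournament (T : finType) (r : rel T) : Prop :=
  irreflexive r /\ (forall u v : T, u != v -> r u v = ~~ r v u).

Definition elems (T : finType) (F : {set T}) := {x : T | x \in F}.

(* Rank of a finite sub-tournament F of X = (T, r), for natural-number
   levels: rk_ge r k F  <->  rk_X(F) >= k.
   A prime extension B of F is represented (up to isomorphism over F) as a
   tournament rB on option (elems F), with F embedded via Some and the new
   point None.  A realization of B in X is an injective, edge-preserving map
   g : option (elems F) -> T fixing F pointwise; its image is C. *)
Fixpoint rk_ge (T : finType) (r : rel T) (k : nat) (F : {set T}) : Prop :=
  match k with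
  | 0 => True
  | k'.+1 =>
      forall rB : rel (option (elems F)),
        is_tournament rB ->
        (forall a b : elems F, rB (Some a) (Some b) = r (val a) (val b)) ->
        exists g : option (elems F) -> T,
          [/\ injective g,
              (forall a : elems F, g (Some a) = val a),
              (forall x y, rB x y = r (g x) (g y))
            & rk_ge r k' [set g x | x : option (elems F)]]
  end.

Fixpoint lexlt (s t : seq bool) : bool :=
  match s, t with
  | a :: s', b :: t' => (~~ a && b) || ((a == b) && lexlt s' t')
  | _, _ => false
  end.

Definition Hvert (n : nat) := {j : 'I_n & (nat_of_ord j).-tuple bool}.

Definition Hlev n (u : Hvert n) : nat := tag u.
Definition Hstr n (u : Hvert n) : seq bool := val (tagged u).

Definition Hedge (n : nat) : rel (Hvert n) := fun u w =>
  let j := Hlev u in let i := Hlev w in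
  if i < j then nth false (Hstr u) i
  else if j < i then ~~ nth false (Hstr w) j
  else lexlt (Hstr u) (Hstr w).

(* Adding a point to F inside a tournament amounts to choosing its type over F,
   i.e. its pattern of edges to F, so rk F >= k+1 says that every type over F
   has a realizer w outside F with rk (w |: F) >= k.  Hence if rk F >= k, every
   type over F has at least 2^k - 1 realizers: besides w, the realizers of p
   split according to their edge with w into the realizers of the two types
   over w |: F extending p, each of rank >= k-1.  A tournament of rank >= n+1
   thus has at least 2^(n+1) - 1 vertices, more than H_n.  Conversely, if F
   meets each level below k of H_n at most once, every type p over F is
   realized at level k by the string whose i-th bit is the value of p on the
   point of F at level i; adding it keeps the invariant one level up, so
   induction gives rk H_n >= n. *)

From mathcomp Require Import all_boot.
From mathcomp Require Import zify.

Set Implicit Arguments. Unset Strict Implicit. Unset Printing Implicit Defensive.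

Section RealizersOfTypes.
Variables (T : finType) (r : rel T).
Hypothesis r_tour : is_tournament r.

Definition realizers (F : {set T}) (p : T -> bool) : {set T} :=
  [set w | (w \notin F) && [forall x in F, r w x == p x]].

Definition type_ext (F : {set T}) (p : T -> bool) : rel (option (elems F)) :=
  fun x y => match x, y with
  | Some a, Some b => r (val a) (val b)
  | None, Some b => p (val b)
  | Some a, None => ~~ p (val a)
  | None, None => false
  end.
Arguments type_ext F p : clear implicits.

Lemma type_ext_tour (F : {set T}) (p : T -> bool) : is_tournament (type_ext F p).
Proof.
case: r_tour => r_irr r_anti; split; first by case=> [a|] //=; apply: r_irr.
case=> [a|] [b|] //= neq_ab; last by rewrite negbK.
by apply: r_anti; apply: contra neq_ab => /eqP/val_inj ->.
Qed.

Lemma imset_ext_fix (F : {set T}) (g : option (elems F) -> T) :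
  (forall a, g (Some a) = val a) -> [set g x | x : option (elems F)] = g None |: F.
Proof.
move=> gS; apply/setP => y; rewrite in_setU1; apply/imsetP/predU1P.
  by case=> [[a|]] _ ->; [right; rewrite gS; apply: valP | left].
case=> [->|Fy]; first by exists None.
by exists (Some (exist _ y Fy : elems F)); rewrite ?gS.
Qed.

Lemma rk_geSP k (F : {set T}) :
  rk_ge r k.+1 F <-> forall p, exists2 w, w \in realizers F p & rk_ge r k (w |: F).
Proof.
split=> [rkF p | realF rB rB_tour rB_F].
  have [g [g_inj gS g_hom rk_g]] := rkF _ (type_ext_tour F p) (fun _ _ => erefl).
  exists (g None); last by rewrite -imset_ext_fix.
  rewrite inE; apply/andP; split.
    by apply/negP => Fg; move: (gS (exist _ (g None) Fg : elems F)) => /= /g_inj.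
  apply/forall_inP => x Fx.
  by rewrite -[x in r _ x]/(val (exist _ x Fx : elems F)) -gS -g_hom.
pose p x := if insub x is Some a then rB None (Some a) else false.
have [w] := realF p; rewrite inE => /andP[wNF /forall_inP w_p] rk_w.
pose g (x : option (elems F)) := if x is Some a then val a else w.
have w_a (a : elems F) : rB None (Some a) = r w (val a).
  by rewrite (eqP (w_p _ (valP a))) /p valK.
exists g; split=> //; last by rewrite imset_ext_fix.
  case=> [a|] [b|] //= eq_ab; first by congr Some; apply: val_inj.
  - by move: wNF; rewrite -eq_ab (valP a).
  - by move: wNF; rewrite eq_ab (valP b).
case: r_tour rB_tour => r_irr r_anti [rB_irr rB_anti].
case=> [a|] [b|] //=; last by rewrite rB_irr r_irr.
rewrite rB_anti // w_a r_anti ?negbK //.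
by apply: contraNneq wNF => ->; apply: valP.
Qed.

Lemma realizers_setU1 (F : {set T}) p w b : w \notin F ->
  realizers (w |: F) [eta p with w |-> b] = [set y in realizers F p :\ w | r y w == b].
Proof.
move=> wNF; apply/setP => y; rewrite !inE negb_or -!andbA; do 2 congr (_ && _).
have p_F x : x \in F -> [eta p with w |-> b] x = p x.
  by move=> Fx /=; rewrite ifN //; apply: contraTneq Fx => ->.
apply/forall_inP/andP => [y_pb | [y_p y_wb] x].
  split; last by have := y_pb w; rewrite setU11 /= eqxx; apply.
  by apply/forall_inP => x Fx; rewrite -p_F // y_pb // in_setU1 Fx orbT.
rewrite in_setU1 => /predU1P[-> /=|Fx]; first by rewrite eqxx.
by rewrite p_F //; apply: (forall_inP y_p).
Qed.

Lemma card_realizers_rk_ge k (F : {set T}) p :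
  rk_ge r k F -> (2 ^ k).-1 <= #|realizers F p|.
Proof.
elim: k F p => [//|k IH] F p /rk_geSP/(_ p) [w Rw rk_w].
have wNF : w \notin F by move: Rw; rewrite inE => /andP[].
have := IH _ [eta p with w |-> true] rk_w; have := IH _ [eta p with w |-> false] rk_w.
rewrite !realizers_setU1 //; set A := realizers F p :\ w.
have -> : [set y in A | r y w == true] = A :&: [set y | r y w].
  by apply/setP => y; rewrite !inE; case: (r y w); rewrite ?andbF ?andbT.
have -> : [set y in A | r y w == false] = A :\: [set y | r y w].
  by apply/setP => y; rewrite !inE; case: (r y w); rewrite ?andbF ?andbT.
have := cardsID [set y | r y w] A.
have := cardsD1 w (realizers F p); rewrite Rw -/A add1n expnS.
have := expn_gt0 2 k; lia.
Qed.

End RealizersOfTypes.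

Lemma lexlt_irr s : lexlt s s = false.
Proof. by elim: s => [|[] s IH] //=; rewrite IH. Qed.

Lemma lexlt_anti s t : size s = size t -> s != t -> lexlt s t = ~~ lexlt t s.
Proof.
elim: s t => [|a s IH] [|b t] //= [] eq_st; rewrite eqseq_cons negb_and.
by case: a; case: b => //= ?; apply: IH.
Qed.

Lemma eq_Hvert n (u w : Hvert n) : Hlev u = Hlev w -> Hstr u = Hstr w -> u = w.
Proof.
case: u w => [j s] [i t]; rewrite /Hlev /Hstr /= => /val_inj eq_ji.
by case: i / eq_ji t => t /val_inj ->.
Qed.

Lemma Hedge_tour n : is_tournament (@Hedge n).
Proof.
split=> [u | u w neq_uw]; first by rewrite /Hedge ltnn lexlt_irr.
rewrite /Hedge; case: (ltngtP (Hlev w) (Hlev u)) => [_|_|eq_lev]; rewrite ?negbK //.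
apply: lexlt_anti; first by rewrite /Hstr !size_tuple.
by apply: contra neq_uw => /eqP eq_str; apply/eqP/eq_Hvert.
Qed.

Lemma card_Hvert n : #|{: Hvert n}| = (2 ^ n).-1.
Proof.
rewrite card_tagged (_ : [seq _ | i <- _] = [seq 2 ^ i | i <- iota 0 n]); last first.
  by rewrite -val_enum_ord -map_comp; apply: eq_map => i; rewrite /= card_tuple card_bool.
elim: n => [//|n IH].
rewrite -[n.+1]addn1 iotaD map_cat sumn_cat IH /= add0n addn0 expnD expn1.
have := expn_gt0 2 n; lia.
Qed.

Lemma exists_Hrealizer n k (F : {set Hvert n}) (p : Hvert n -> bool) :
  k < n -> {in F, forall u, Hlev u < k} -> {in F &, injective (@Hlev n)} ->
  exists2 v, Hlev v = k & {in F, forall u, Hedge v u = p u}.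
Proof.
move=> lt_kn F_lt F_inj.
pose s := mkseq (fun i => [exists u in F, (Hlev u == i) && p u]) k.
have size_s : size s == k by rewrite size_mkseq.
exists (existT _ (Ordinal lt_kn) (Tuple size_s)) => // u Fu.
rewrite /Hedge /Hlev /= F_lt // /Hstr /= nth_mkseq ?F_lt //.
apply/exists_inP/idP => [[w Fw /andP[/eqP/(F_inj _ _ Fw Fu)-> //]] | pu].
by exists u; rewrite ?eqxx.
Qed.

Lemma rk_ge_Hedge m n k (F : {set Hvert n}) :
  k + m <= n -> {in F, forall u, Hlev u < k} -> {in F &, injective (@Hlev n)} ->
  rk_ge (@Hedge n) m F.
Proof.
elim: m k F => [//|m IH] k F le_kmn F_lt F_inj.
apply/(rk_geSP (Hedge_tour n)) => p.
have [|v lev_v v_p] := exists_Hrealizer p _ F_lt F_inj; first lia.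
have vNF : v \notin F by apply/negP => /F_lt; rewrite lev_v ltnn.
exists v; first by rewrite inE vNF; apply/forall_inP => u Fu; rewrite v_p.
apply: (IH k.+1); first lia.
  by move=> u; rewrite in_setU1 => /predU1P[->|/F_lt/ltnW //]; rewrite lev_v.
move=> u w; rewrite !in_setU1 => /predU1P[->|Fu] /predU1P[->|Fw] //.
- by move=> eq_lev; move: (F_lt _ Fw); rewrite -eq_lev lev_v ltnn.
- by move=> eq_lev; move: (F_lt _ Fu); rewrite eq_lev lev_v ltnn.
- exact: F_inj.
Qed.

Theorem theorem5p3 (n : nat) (hn : 1 <= n) :
  rk_ge (@Hedge n) n set0 /\ ~ rk_ge (@Hedge n) n.+1 set0.
Proof.
split; first by apply: (@rk_ge_Hedge n n 0) => // u; rewrite inE.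
move=> /(card_realizers_rk_ge (Hedge_tour n) xpredT).
have := subset_leq_card (subsetT (realizers (@Hedge n) set0 xpredT)).
rewrite cardsT card_Hvert expnS; have := expn_gt0 2 n; lia.
Qed.
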